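(* Let $(F_1,+_1,\cdot_1)$ and $(F_2,+_2,\cdot_2)$ be left near-fields and assume $(F_1,+_1,\cdot_1)$ is a division ring. Then the canonical near-vector spaces $((F_1,+_1,\cdot_1),(F_1,\cdot_1))$ and $((F_2,+_2,\cdot_2),(F_2,\cdot_2))$ are isomorphic as near-vector spaces if and only if $(F_1,+_1,\cdot_1)$ and $(F_2,+_2,\cdot_2)$ are isomorphic as near-fields. In particular, if these canonical near-vector spaces are isomorphic, then $(F_2,+_2,\cdot_2)$ is a division ring.
   Context: A left near-field $(F,+,\cdot)$: $(F,+)$ a group with identity $0$, $(F\setminus\{0\},\cdot)$ a group, $0\cdot\alpha=0$, and $\gamma(\alpha+\beta)=\gamma\alpha+\gamma\beta$. A near-field isomorphism is a bijection preserving $+$ and $\cdot$. The canonical near-vector space of $(F,+,\cdot)$ is $((F,+,\cdot),(F,\cdot))$, with $F$ acting on $(F,+)$ by multiplication. An isomorphism $(\Psi,\varphi)$ of near-vector spaces from $((V_1,\boxplus_1,\boxdot_1),(F_1,\cdot_1))$ to $((V_2,\boxplus_2,\boxdot_2),(F_2,\cdot_2))$ consists of an additive bijection $\Psi:V_1\to V_2$ and a group isomorphism $\varphi:(F_1\setminus\{0\},\cdot_1)\to(F_2\setminus\{0\},\cdot_2)$ with $\Psi(\alpha\boxdot_1u)=\varphi(\alpha)\boxdot_2\Psi(u)$ for all $u\in V_1$, $\alpha\in F_1\setminus\{0\}$. *)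

Set Implicit Arguments.

Record NearField := {
  nf_carrier :> Type;
  nf_add : nf_carrier -> nf_carrier -> nf_carrier;
  nf_mul : nf_carrier -> nf_carrier -> nf_carrier;
  nf_zero : nf_carrier;
  nf_one : nf_carrier;
  nf_add_assoc : forall a b c, nf_add a (nf_add b c) = nf_add (nf_add a b) c;
  nf_add_0l : forall a, nf_add nf_zero a = a;
  nf_add_0r : forall a, nf_add a nf_zero = a;
  nf_add_inv : forall a, exists b, nf_add a b = nf_zero /\ nf_add b a = nf_zero;
  nf_one_neq0 : nf_one <> nf_zero;
  nf_mul_closed : forall a b, a <> nf_zero -> b <> nf_zero -> nf_mul a b <> nf_zero;
  nf_mul_assoc : forall a b c, a <> nf_zero -> b <> nf_zero -> c <> nf_zero ->
      nf_mul a (nf_mul b c) = nf_mul (nf_mul a b) c;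
  nf_mul_1l : forall a, a <> nf_zero -> nf_mul nf_one a = a;
  nf_mul_1r : forall a, a <> nf_zero -> nf_mul a nf_one = a;
  nf_mul_inv : forall a, a <> nf_zero -> exists b, b <> nf_zero /\
      nf_mul a b = nf_one /\ nf_mul b a = nf_one;
  nf_mul_0l : forall a, nf_mul nf_zero a = nf_zero;
  nf_mul_addr : forall g a b, nf_mul g (nf_add a b) = nf_add (nf_mul g a) (nf_mul g b)
}.

Arguments nf_add {n}.
Arguments nf_mul {n}.
Arguments nf_zero {n}.

Definition is_division_ring (F : NearField) : Prop :=
  (forall a b : F, nf_add a b = nf_add b a) /\
  (forall a b c : F, nf_mul (nf_add a b) c = nf_add (nf_mul a c) (nf_mul b c)).

Definition bijective_fun {A B : Type} (f : A -> B) : Prop :=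
  (forall x y, f x = f y -> x = y) /\ (forall y, exists x, f x = y).

Definition nearfield_iso {F1 F2 : NearField} (f : F1 -> F2) : Prop :=
  bijective_fun f /\
  (forall a b, f (nf_add a b) = nf_add (f a) (f b)) /\
  (forall a b, f (nf_mul a b) = nf_mul (f a) (f b)).

Definition nearfield_isomorphic (F1 F2 : NearField) : Prop :=
  exists f : F1 -> F2, nearfield_iso f.

(** A group isomorphism (F1\{0},.) -> (F2\{0},.), represented as a function
    F1 -> F2 whose values are only relevant on nonzero arguments. *)
Definition mult_group_iso {F1 F2 : NearField} (phi : F1 -> F2) : Prop :=
  (forall a, a <> nf_zero -> phi a <> nf_zero) /\
  (forall a b, a <> nf_zero -> b <> nf_zero -> phi (nf_mul a b) = nf_mul (phi a) (phi b)) /\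
  (forall a b, a <> nf_zero -> b <> nf_zero -> phi a = phi b -> a = b) /\
  (forall c, c <> nf_zero -> exists a, a <> nf_zero /\ phi a = c).

Definition canonical_nvs_iso {F1 F2 : NearField} (Psi phi : F1 -> F2) : Prop :=
  bijective_fun Psi /\
  (forall u v, Psi (nf_add u v) = nf_add (Psi u) (Psi v)) /\
  mult_group_iso phi /\
  (forall (u a : F1), a <> nf_zero -> Psi (nf_mul a u) = nf_mul (phi a) (Psi u)).

Definition canonical_nvs_isomorphic (F1 F2 : NearField) : Prop :=
  exists Psi phi : F1 -> F2, canonical_nvs_iso Psi phi.

(* Normalising an isomorphism (Psi, phi) of canonical near-vector spaces by
   e = Psi 1 gives a near-field isomorphism x |-> e^-1 Psi x: since
   Psi (a b) = phi a Psi b and Psi a = phi a e, the factor e e^-1 can be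
   inserted between phi a and Psi b.  No hypothesis on F1 is needed for this;
   being a division ring is then transported along the near-field isomorphism.
   Conversely a near-field isomorphism f gives the near-vector space
   isomorphism (f, f). *)

From Pilot Require Import Defs.
From Stdlib Require Import Classical.

Set Implicit Arguments.
Unset Strict Implicit.

Section NearFieldFacts.

Variable F : NearField.

Lemma nf_add_idem_eq0 (x : F) : nf_add x x = x -> x = nf_zero.
Proof.
  intro Hxx. destruct (nf_add_inv F x) as [y [_ Hyx]].
  transitivity (nf_add (nf_add y x) x).
  - rewrite Hyx, nf_add_0l. reflexivity.
  - rewrite <- nf_add_assoc, Hxx. exact Hyx.
Qed.

Lemma nf_mul_0r (g : F) : nf_mul g nf_zero = nf_zero.
Proof. apply nf_add_idem_eq0. rewrite <- nf_mul_addr, nf_add_0l. reflexivity. Qed.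

Lemma nf_mul_1l_all (a : F) : nf_mul (nf_one F) a = a.
Proof.
  destruct (classic (a = nf_zero)) as [-> | Ha].
  - apply nf_mul_0r.
  - exact (nf_mul_1l F Ha).
Qed.

(* The zero element is absorbing on both sides, so associativity, stated in
   Defs only on F \ {0}, holds on all of F. *)
Lemma nf_mul_assoc_all (a b c : F) :
  nf_mul a (nf_mul b c) = nf_mul (nf_mul a b) c.
Proof.
  destruct (classic (a = nf_zero)) as [-> | Ha].
  { rewrite !nf_mul_0l. reflexivity. }
  destruct (classic (b = nf_zero)) as [-> | Hb].
  { rewrite nf_mul_0l, !nf_mul_0r, nf_mul_0l. reflexivity. }
  destruct (classic (c = nf_zero)) as [-> | Hc].
  { rewrite !nf_mul_0r. reflexivity. }
  exact (nf_mul_assoc F Ha Hb Hc).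
Qed.

Lemma nf_mulKV (a b z : F) : nf_mul a b = nf_one F -> nf_mul a (nf_mul b z) = z.
Proof. intro Hab. rewrite nf_mul_assoc_all, Hab. apply nf_mul_1l_all. Qed.

End NearFieldFacts.

Lemma additive_map0 (F1 F2 : NearField) (f : F1 -> F2) :
  (forall a b, f (nf_add a b) = nf_add (f a) (f b)) -> f nf_zero = nf_zero.
Proof. intro Hadd. apply nf_add_idem_eq0. rewrite <- Hadd, nf_add_0l. reflexivity. Qed.

Lemma injective_additive_neq0 (F1 F2 : NearField) (f : F1 -> F2) :
  (forall x y, f x = f y -> x = y) ->
  (forall a b, f (nf_add a b) = nf_add (f a) (f b)) ->
  forall x, x <> nf_zero -> f x <> nf_zero.
Proof.
  intros Hinj Hadd x Hx Hfx. apply Hx, Hinj. rewrite Hfx, (additive_map0 Hadd).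
  reflexivity.
Qed.

Section NormalizedNvsIso.

Variables (F1 F2 : NearField) (Psi phi : F1 -> F2) (e' : F2).
Hypothesis Psi_inj : forall x y, Psi x = Psi y -> x = y.
Hypothesis Psi_surj : forall y, exists x, Psi x = y.
Hypothesis Psi_add : forall u v, Psi (nf_add u v) = nf_add (Psi u) (Psi v).
Hypothesis Psi_scale : forall u a, a <> nf_zero -> Psi (nf_mul a u) = nf_mul (phi a) (Psi u).
Hypothesis Psi1_mulV : nf_mul (Psi (nf_one F1)) e' = nf_one F2.
Hypothesis Psi1_mulVl : nf_mul e' (Psi (nf_one F1)) = nf_one F2.

Lemma Psi_eq_phi_mul_Psi1 (a : F1) : a <> nf_zero -> Psi a = nf_mul (phi a) (Psi (nf_one F1)).
Proof. intro Ha. rewrite <- Psi_scale, nf_mul_1r by exact Ha. reflexivity. Qed.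

Lemma normalized_nvs_iso_mul (a b : F1) :
  nf_mul e' (Psi (nf_mul a b)) = nf_mul (nf_mul e' (Psi a)) (nf_mul e' (Psi b)).
Proof.
  destruct (classic (a = nf_zero)) as [-> | Ha].
  { rewrite nf_mul_0l, (additive_map0 Psi_add), !nf_mul_0r, nf_mul_0l. reflexivity. }
  rewrite Psi_scale, (Psi_eq_phi_mul_Psi1 Ha) by exact Ha.
  rewrite <- (nf_mulKV (Psi b) Psi1_mulV) at 1.
  rewrite !nf_mul_assoc_all. reflexivity.
Qed.

Lemma normalized_nvs_iso : nearfield_iso (fun x => nf_mul e' (Psi x)).
Proof.
  split; [split | split].
  - intros x y Hxy. apply Psi_inj.
    rewrite <- (nf_mulKV (Psi x) Psi1_mulV), <- (nf_mulKV (Psi y) Psi1_mulV), Hxy.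
    reflexivity.
  - intro y. destruct (Psi_surj (nf_mul (Psi (nf_one F1)) y)) as [x Hx].
    exists x. rewrite Hx. exact (nf_mulKV y Psi1_mulVl).
  - intros a b. rewrite Psi_add, nf_mul_addr. reflexivity.
  - exact normalized_nvs_iso_mul.
Qed.

End NormalizedNvsIso.

Lemma canonical_nvs_iso_nearfield_isomorphic (F1 F2 : NearField) :
  canonical_nvs_isomorphic F1 F2 -> nearfield_isomorphic F1 F2.
Proof.
  intros [Psi [phi [[Psi_inj Psi_surj] [Psi_add [_ Psi_scale]]]]].
  assert (He : Psi (nf_one F1) <> nf_zero).
  { apply (injective_additive_neq0 Psi_inj Psi_add), nf_one_neq0. }
  destruct (nf_mul_inv F2 He) as [e' [_ [HeV HVe]]].
  exists (fun x => nf_mul e' (Psi x)).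
  exact (normalized_nvs_iso Psi_inj Psi_surj Psi_add Psi_scale HeV HVe).
Qed.

Lemma nearfield_iso_canonical_nvs_iso (F1 F2 : NearField) (f : F1 -> F2) :
  nearfield_iso f -> canonical_nvs_iso f f.
Proof.
  intros [[f_inj f_surj] [f_add f_mul]].
  split; [split; assumption |]. split; [exact f_add |].
  split; [| intros; apply f_mul].
  split; [| split; [| split]].
  - exact (injective_additive_neq0 f_inj f_add).
  - intros; apply f_mul.
  - intros; apply f_inj; assumption.
  - intros c Hc. destruct (f_surj c) as [a <-]. exists a. split; [| reflexivity].
    intros ->. apply Hc, (additive_map0 f_add).
Qed.

Lemma nearfield_iso_division_ring (F1 F2 : NearField) (f : F1 -> F2) :
  nearfield_iso f -> is_division_ring F1 -> is_division_ring F2.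
Proof.
  intros [[_ f_surj] [f_add f_mul]] [addC mulDl]. split.
  - intros x y. destruct (f_surj x) as [a <-]. destruct (f_surj y) as [b <-].
    rewrite <- !f_add, addC. reflexivity.
  - intros x y z.
    destruct (f_surj x) as [a <-]. destruct (f_surj y) as [b <-].
    destruct (f_surj z) as [c <-].
    rewrite <- f_add, <- !f_mul, <- f_add, mulDl. reflexivity.
Qed.

Theorem mainTheorem10 (F1 F2 : NearField) (hdiv : is_division_ring F1) :
  (canonical_nvs_isomorphic F1 F2 <-> nearfield_isomorphic F1 F2) /\
  (canonical_nvs_isomorphic F1 F2 -> is_division_ring F2).
Proof.
  split; [split |].
  - apply canonical_nvs_iso_nearfield_isomorphic.
  - intros [f Hf]. exists f, f. exact (nearfield_iso_canonical_nvs_iso Hf).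
  - intro Hnvs. destruct (canonical_nvs_iso_nearfield_isomorphic Hnvs) as [f Hf].
    exact (nearfield_iso_division_ring Hf hdiv).
Qed.
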